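(* Let $I$ be a small directed category and let $A_I$ be the poset constructed from $I$ as described in the context. Then $A_I$ is a cofinite directed poset of infinite height.
   Context: Posets are categories with a unique morphism $u\to v$ iff $u\geq v$. A poset is cofinite if each $\{z\mid z\le x\}$ is finite; directed if nonempty with common upper bounds for pairs; of infinite height if each element has a strictly larger one. A subset $R$ of a poset $T$ is a section if $x\in R$, $y<x$ imply $y\in R$. For a category $\mathcal{R}$, $\mathcal{R}^{\lhd}$ is $\mathcal{R}$ with a new initial object $\infty$ adjoined. A category $I$ is directed if nonempty, any two objects admit an object mapping to both, and any parallel pair $f,g:s\to t$ is equalized by some $h:u\to s$. Construction: set $A_I^{-1}=\emptyset$ and $p^{-1}_I$ the empty functor. Given a poset $A_I^n$ and a functor $p_I^n:A_I^n\to I$, let $B_I^{n+1}$ be the set of pairs $(R,p)$ with $R$ a finite section of $A_I^n$ and $p:R^{\lhd}\to I$ a functor with $p|_R=p_I^n|_R$. Set $A_I^{n+1}=A_I^n\sqcup B_I^{n+1}$, with the order of $A_I^n$ extended by $c<(R,p)$ iff $c\in R$ (for $c\in A_I^n$), and $p_I^{n+1}$ extending $p_I^n$ with $p_I^{n+1}(R,p)=p(\infty)$ (on morphisms $(R,p)\to c$ it is $p(\infty\to c)$). Let $A_I=\bigcup_n A_I^n$ and $p_I:A_I\to I$ the union of the $p_I^n$. *)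

From Stdlib Require Import List.
Set Implicit Arguments.

Record Cat := {
  Ob : Type;
  Hom : Ob -> Ob -> Type;
  idm : forall a, Hom a a;
  comp : forall a b c, Hom b c -> Hom a b -> Hom a c;
  comp_id_l : forall a b (f : Hom a b), comp (idm b) f = f;
  comp_id_r : forall a b (f : Hom a b), comp f (idm a) = f;
  comp_assoc : forall a b c d (h : Hom c d) (g : Hom b c) (f : Hom a b),
      comp h (comp g f) = comp (comp h g) f
}.
Arguments idm {c} a : rename.
Arguments comp {c a b c0} _ _ : rename.

Definition directed_cat (I : Cat) : Prop :=
  inhabited (Ob I) /\
  (forall s t : Ob I, exists u (f : Hom I u s) (g : Hom I u t), True) /\
  (forall (s t : Ob I) (f g : Hom I s t),
      exists u (h : Hom I u s), comp f h = comp g h).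

(* A stage is a set A^n with a relation (x <= y) and a functor p^n to I:
   a morphism u -> v exists iff u >= v, i.e. Sle v u, and is sent to
   Smor u v _ : Hom (p u) (p v). *)
Record Stage (I : Cat) := {
  St : Type;
  Sle : St -> St -> Prop;
  Sob : St -> Ob I;
  Smor : forall x y, Sle y x -> Hom I (Sob x) (Sob y)
}.
Arguments St {I} s.
Arguments Sle {I} s _ _.
Arguments Sob {I} s _.
Arguments Smor {I} s x y _.

Definition Slt {I} (s : Stage I) (x y : St s) : Prop := Sle s x y /\ x <> y.

(* The pairs (R,p) of B^{n+1}: R a finite section of A^n, and p a functor
   R^lhd -> I with p|_R = p^n|_R.  Such a functor is exactly the datum of
   p(oo) together with the morphisms p(oo -> c), c in R, satisfying
   functoriality p(c -> d) o p(oo -> c) = p(oo -> d) for d <= c in R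
   (p(oo -> oo) = id and the rest being forced by p|_R = p^n|_R). *)
Record Bnew {I : Cat} (s : Stage I) := {
  bR : St s -> Prop;
  bR_finite : exists l : list (St s), forall x, bR x <-> In x l;
  bR_section : forall x y, bR x -> Slt s y x -> bR y;
  binf : Ob I;
  bmor : forall c, bR c -> Hom I binf (Sob s c);
  bmor_funct : forall c d (hc : bR c) (hd : bR d) (h : Sle s d c),
      @bmor d hd = comp (Smor s c d h) (@bmor c hc)
}.
Arguments bR {I s} b _.
Arguments binf {I s} b.
Arguments bmor {I s} b c _.

Unset Implicit Arguments.

Definition ext_le {I} (s : Stage I) (x y : St s + Bnew s) : Prop :=
  match x, y with
  | inl x0, inl y0 => Sle s x0 y0
  | inl c, inr b => bR b c
  | inr _, inl _ => False
  | inr b, inr b' => b = b'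
  end.

Definition ext_ob {I} (s : Stage I) (x : St s + Bnew s) : Ob I :=
  match x with inl x0 => Sob s x0 | inr b => binf b end.

Definition ext_mor {I} (s : Stage I) (x y : St s + Bnew s) :
  ext_le s y x -> Hom I (ext_ob s x) (ext_ob s y) :=
  match x as x' , y as y' return ext_le s y' x' -> Hom I (ext_ob s x') (ext_ob s y') with
  | inl x0, inl y0 => fun h => Smor s x0 y0 h
  | inr b, inl c => fun h => bmor b c h
  | inl _, inr _ => fun h => False_rect _ h
  | inr b, inr b' => fun h =>
      match h in _ = z return Hom I (binf z) (binf b') with
      | eq_refl => idm (binf b')
      end
  end.

Definition extend {I} (s : Stage I) : Stage I :=
  {| St := (St s + Bnew s)%type; Sle := ext_le s; Sob := ext_ob s;
     Smor := ext_mor s |}.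

Definition empty_stage (I : Cat) : Stage I :=
  {| St := Empty_set; Sle := fun x _ => match x with end;
     Sob := fun x => match x with end;
     Smor := fun x _ _ => match x with end |}.

(* stage I k = A_I^{k-1}; stage I 0 = A_I^{-1} = empty *)
Fixpoint stage (I : Cat) (k : nat) : Stage I :=
  match k with
  | 0 => empty_stage I
  | S k' => extend (stage I k')
  end.

Fixpoint embed (I : Cat) (m j : nat) : St (stage I m) -> St (stage I (j + m)) :=
  match j return St (stage I m) -> St (stage I (j + m)) with
  | 0 => fun x => x
  | S j' => fun x => inl (embed I m j' x)
  end.

Definition castSt (I : Cat) (m n : nat) (e : m = n) (x : St (stage I m)) :
  St (stage I n) := eq_rect m (fun k => St (stage I k)) x n e.

(* Every element of A_I = \bigcup_n A_I^n lies in exactly one B_I^{k+1};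
   we represent A_I as the disjoint union of the B_I^{k+1}. *)
Definition AI (I : Cat) : Type := { k : nat & Bnew (stage I k) }.

Definition AIpt (I : Cat) (a : AI I) : St (stage I (S (projT1 a))) :=
  (inr (projT2 a) : St (extend (stage I (projT1 a)))).

(* a <= b in A_I iff this holds in some common stage A_I^n *)
Definition AIle (I : Cat) (a b : AI I) : Prop :=
  exists (j j' : nat) (e : j + S (projT1 a) = j' + S (projT1 b)),
    Sle (stage I (j' + S (projT1 b)))
        (castSt I _ _ e (embed I (S (projT1 a)) j (AIpt I a)))
        (embed I (S (projT1 b)) j' (AIpt I b)).

Definition is_poset (T : Type) (le : T -> T -> Prop) : Prop :=
  (forall x, le x x) /\
  (forall x y, le x y -> le y x -> x = y) /\
  (forall x y z, le x y -> le y z -> le x z).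

Definition cofinite (T : Type) (le : T -> T -> Prop) : Prop :=
  forall x, exists l : list T, forall z, le z x -> In z l.

Definition directed_poset (T : Type) (le : T -> T -> Prop) : Prop :=
  inhabited T /\ forall x y, exists z, le x z /\ le y z.

Definition infinite_height (T : Type) (le : T -> T -> Prop) : Prop :=
  forall x, exists y, le x y /\ x <> y.

(* Every element of A_I is born at a unique finite stage, and the order on A_I is
   read off in any stage containing both elements; so reflexivity, antisymmetry,
   transitivity and finiteness of lower sets are inherited from the stages, where
   they hold by induction (a new element lies above a finite section only).  For
   directedness, given x, y in a stage, directedness of I yields a cone over the
   finite section R = {c <= x} u {c <= y}: first a common source for x and y, then,
   by equalizing the finitely many parallel pairs indexed by c <= x, y, one
   making the two candidate legs agree.  The pair (R, cone) is a new element above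
   x and y, born one stage later, which also gives infinite height. *)

From Stdlib Require Import List Arith Lia Classical ClassicalEpsilon ProofIrrelevance Eqdep_dec.

Section Construction.
Variable I : Cat.

Fixpoint AI_of (n : nat) : St (stage I n) -> AI I :=
  match n return St (stage I n) -> AI I with
  | 0 => fun x => match x with end
  | S n' => fun x => match x with
              | inl y => AI_of n' y
              | inr b => existT _ n' b
              end
  end.

Lemma AI_of_level_lt n : forall x, projT1 (AI_of n x) < n.
Proof.
  induction n as [|n IH]; intros x; [destruct x|].
  destruct x as [x|b]; simpl; [specialize (IH x)|]; lia.
Qed.

Lemma AI_of_inj n : forall x y, AI_of n x = AI_of n y -> x = y.
Proof.
  induction n as [|n IH]; intros x y E; [destruct x|].
  destruct x as [x|b], y as [y|b']; simpl in E.
  - f_equal; auto.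
  - pose proof (AI_of_level_lt n x) as L; rewrite E in L; simpl in L; lia.
  - pose proof (AI_of_level_lt n y) as L; rewrite <- E in L; simpl in L; lia.
  - f_equal; exact (inj_pair2_eq_dec _ Nat.eq_dec _ _ _ _ E).
Qed.

Lemma AI_of_surj n : forall a, projT1 a < n -> exists x, AI_of n x = a.
Proof.
  induction n as [|n IH]; intros a La; [lia|].
  destruct (Nat.eq_dec (projT1 a) n) as [E|E].
  - destruct a as [k b]; simpl in E; subst k.
    exists (inr b : St (extend (stage I n))); reflexivity.
  - destruct (IH a) as [x Hx]; [lia|].
    exists (inl x : St (extend (stage I n))); exact Hx.
Qed.

Lemma AI_of_embed m j x : AI_of (j + m) (embed I m j x) = AI_of m x.
Proof. induction j; simpl; auto. Qed.

Lemma AI_of_cast m n (e : m = n) x : AI_of n (castSt I m n e x) = AI_of m x.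
Proof. destruct e; reflexivity. Qed.

Lemma AI_of_AIpt a : AI_of (S (projT1 a)) (AIpt I a) = a.
Proof. destruct a; reflexivity. Qed.

Lemma AI_common_stage a b : exists n x y, AI_of n x = a /\ AI_of n y = b.
Proof.
  destruct (AI_of_surj (S (Nat.max (projT1 a) (projT1 b))) a) as [x Hx]; [lia|].
  destruct (AI_of_surj (S (Nat.max (projT1 a) (projT1 b))) b) as [y Hy]; [lia|].
  eauto.
Qed.

Lemma stage_le_embed m j x y :
  Sle (stage I (j + m)) (embed I m j x) (embed I m j y) <-> Sle (stage I m) x y.
Proof. induction j; simpl; tauto. Qed.

Lemma stage_le_refl n : forall x, Sle (stage I n) x x.
Proof.
  induction n as [|n IH]; intros x; [destruct x|].
  destruct x; simpl; auto.
Qed.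

Lemma stage_le_trans n : forall x y z,
  Sle (stage I n) x y -> Sle (stage I n) y z -> Sle (stage I n) x z.
Proof.
  induction n as [|n IH]; intros x y z Hxy Hyz; [destruct x|].
  destruct x as [x|b], y as [y|b'], z as [z|b'']; simpl in *;
    try tauto; try congruence; eauto.
  destruct (classic (x = y)) as [->|Nxy]; [assumption|].
  exact (bR_section b'' Hyz (conj Hxy Nxy)).
Qed.

Lemma stage_le_antisym n : forall x y,
  Sle (stage I n) x y -> Sle (stage I n) y x -> x = y.
Proof.
  induction n as [|n IH]; intros x y Hxy Hyx; [destruct x|].
  destruct x as [x|b], y as [y|b']; simpl in *; try tauto.
  - f_equal; auto.
  - congruence.
Qed.

Lemma stage_le_level n : forall x y,
  Sle (stage I n) x y -> projT1 (AI_of n x) <= projT1 (AI_of n y).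
Proof.
  induction n as [|n IH]; intros x y Hxy; [destruct x|].
  destruct x as [x|b], y as [y|b']; simpl in *; try tauto; auto.
  pose proof (AI_of_level_lt n x); lia.
Qed.

Lemma stage_lower_finite n : forall x,
  exists l, forall z, Sle (stage I n) z x <-> In z l.
Proof.
  induction n as [|n IH]; intros x; [destruct x|].
  set (up := fun c => inl c : St (extend (stage I n))).
  destruct x as [x|b].
  - destruct (IH x) as [l Hl]; exists (map up l).
    intros [z|b']; simpl; rewrite in_map_iff.
    + rewrite Hl; split; [eauto|intros (c & Ec & Hc); injection Ec as ->; exact Hc].
    + split; [tauto|intros (c & Ec & _); discriminate].
  - destruct (bR_finite b) as [l Hl]; exists (inr b :: map up l).
    intros [z|b']; simpl; rewrite in_map_iff.
    + rewrite Hl; split; [eauto|intros [E|(c & Ec & Hc)]; [discriminate|]].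
      injection Ec as ->; exact Hc.
    + split; [intros ->; auto|intros [E|(c & Ec & _)]; [congruence|discriminate]].
Qed.

Lemma stage_mor_comp n : forall x y z (hxy : Sle (stage I n) y x)
  (hyz : Sle (stage I n) z y) (hxz : Sle (stage I n) z x),
  Smor (stage I n) x z hxz = comp (Smor (stage I n) y z hyz) (Smor (stage I n) x y hxy).
Proof.
  induction n as [|n IH]; intros x y z hxy hyz hxz; [destruct x|].
  destruct x as [x|b], y as [y|b'], z as [z|b'']; simpl in *; try tauto.
  - apply IH.
  - apply bmor_funct.
  - destruct hxy; simpl; rewrite comp_id_r; f_equal; apply proof_irrelevance.
  - destruct hyz, hxy; rewrite (proof_irrelevance _ hxz eq_refl); simpl.
    rewrite comp_id_l; reflexivity.
Qed.

Lemma stage_le_transfer m n x y x' y' :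
  AI_of m x = AI_of n x' -> AI_of m y = AI_of n y' ->
  Sle (stage I m) x y -> Sle (stage I n) x' y'.
Proof.
  intros Ex Ey Hxy.
  destruct (Nat.le_ge_cases m n) as [L|L].
  - assert (exists j, n = j + m) as [j ->] by (exists (n - m); lia).
    rewrite <- (AI_of_embed m j) in Ex, Ey.
    apply AI_of_inj in Ex, Ey; subst; apply stage_le_embed; exact Hxy.
  - assert (exists j, m = j + n) as [j ->] by (exists (m - n); lia).
    rewrite <- (AI_of_embed n j x') in Ex.
    rewrite <- (AI_of_embed n j y') in Ey.
    apply AI_of_inj in Ex, Ey; subst; apply stage_le_embed in Hxy; exact Hxy.
Qed.

Lemma AIle_stage n x y :
  AIle I (AI_of n x) (AI_of n y) <-> Sle (stage I n) x y.
Proof.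
  set (a := AI_of n x); set (b := AI_of n y); split.
  - intros (j & j' & e & H); revert H; apply stage_le_transfer.
    + rewrite AI_of_cast, AI_of_embed, AI_of_AIpt; reflexivity.
    + rewrite AI_of_embed, AI_of_AIpt; reflexivity.
  - intros Hxy.
    assert (e : projT1 b + S (projT1 a) = projT1 a + S (projT1 b)) by lia.
    exists (projT1 b), (projT1 a), e; revert Hxy; apply stage_le_transfer.
    + rewrite AI_of_cast, AI_of_embed, AI_of_AIpt; reflexivity.
    + rewrite AI_of_embed, AI_of_AIpt; reflexivity.
Qed.

Lemma AIle_level a b : AIle I a b -> projT1 a <= projT1 b.
Proof.
  destruct (AI_common_stage a b) as (n & x & y & <- & <-); intros Hab.
  apply stage_le_level, AIle_stage; exact Hab.
Qed.

Lemma directed_equalize_finite (HI : directed_cat I) (T : Type) (Q : T -> Prop)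
  (t : T -> Ob I) (u0 : Ob I) (f g : forall c, Q c -> Hom I u0 (t c)) (l : list T) :
  exists u (h : Hom I u u0), forall c (q : Q c), In c l -> comp (f c q) h = comp (g c q) h.
Proof.
  induction l as [|c l IH].
  - exists u0, (idm u0); intros c q [].
  - destruct IH as (u1 & h1 & H1).
    destruct (classic (Q c)) as [q0|nq].
    + destruct HI as (_ & _ & Heq).
      destruct (Heq _ _ (comp (f c q0) h1) (comp (g c q0) h1)) as (u2 & h2 & H2).
      exists u2, (comp h1 h2); intros c' q [<-|Hin]; rewrite !comp_assoc.
      * rewrite (proof_irrelevance _ q q0); exact H2.
      * rewrite H1; auto.
    + exists u1, h1; intros c' q [<-|Hin]; [contradiction|auto].
Qed.

Definition or_right_of {P Q : Prop} (h : P \/ Q) (np : ~ P) : Q :=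
  match h with or_introl p => False_ind _ (np p) | or_intror q => q end.

Section Cone.
Variables (n : nat) (x y : St (stage I n)) (u : Ob I).
Variables (F : Hom I u (Sob _ x)) (G : Hom I u (Sob _ y)).
Hypothesis legs_agree : forall c hx hy,
  comp (Smor _ x c hx) F = comp (Smor _ y c hy) G.

Definition below_pair (c : St (stage I n)) : Prop :=
  Sle _ c x \/ Sle _ c y.

Definition cone_leg (c : St (stage I n)) (hc : below_pair c) : Hom I u (Sob _ c) :=
  match excluded_middle_informative (Sle _ c x) with
  | left hx => comp (Smor _ x c hx) F
  | right nx => comp (Smor _ y c (or_right_of hc nx)) G
  end.

Lemma cone_leg_funct c d (hc : below_pair c) (hd : below_pair d) (hdc : Sle _ d c) :
  cone_leg d hd = comp (Smor _ c d hdc) (cone_leg c hc).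
Proof.
  unfold cone_leg.
  destruct (excluded_middle_informative (Sle _ c x)) as [hcx|ncx];
  destruct (excluded_middle_informative (Sle _ d x)) as [hdx|ndx].
  - rewrite comp_assoc; f_equal; apply stage_mor_comp.
  - exfalso; apply ndx; eapply stage_le_trans; eauto.
  - rewrite (legs_agree d hdx (stage_le_trans _ _ _ _ hdc (or_right_of hc ncx))).
    rewrite comp_assoc; f_equal; apply stage_mor_comp.
  - rewrite comp_assoc; f_equal; apply stage_mor_comp.
Qed.

Lemma below_pair_finite : exists l, forall c, below_pair c <-> In c l.
Proof.
  destruct (stage_lower_finite n x) as [lx Hx], (stage_lower_finite n y) as [ly Hy].
  exists (lx ++ ly); intros c; unfold below_pair; rewrite in_app_iff, Hx, Hy; tauto.
Qed.

Lemma below_pair_section c d : below_pair c -> Slt _ d c -> below_pair d.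
Proof. intros [H|H] [Hdc _]; [left|right]; eapply stage_le_trans; eauto. Qed.

Definition cone_above : Bnew (stage I n) :=
  {| bR := below_pair; bR_finite := below_pair_finite;
     bR_section := below_pair_section; binf := u; bmor := cone_leg;
     bmor_funct := cone_leg_funct |}.

Lemma cone_above_ge : bR cone_above x /\ bR cone_above y.
Proof. split; [left|right]; apply stage_le_refl. Qed.

End Cone.

Lemma stage_legs_agree (HI : directed_cat I) n (x y : St (stage I n)) :
  exists u (F : Hom I u (Sob _ x)) (G : Hom I u (Sob _ y)),
    forall c hx hy, comp (Smor _ x c hx) F = comp (Smor _ y c hy) G.
Proof.
  destruct (stage_lower_finite n x) as [lx Hlx].
  destruct (proj1 (proj2 HI) (Sob _ x) (Sob _ y)) as (u0 & F0 & G0 & _).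
  destruct (directed_equalize_finite HI _ (fun c => Sle _ c x /\ Sle _ c y) (Sob _) u0
     (fun c q => comp (Smor _ x c (proj1 q)) F0)
     (fun c q => comp (Smor _ y c (proj2 q)) G0) lx) as (u & h & Hh).
  exists u, (comp F0 h), (comp G0 h); intros c hx hy.
  specialize (Hh c (conj hx hy) (proj1 (Hlx c) hx)).
  rewrite (proof_irrelevance _ (proj1 _) hx), (proof_irrelevance _ (proj2 _) hy) in Hh.
  rewrite !comp_assoc; exact Hh.
Qed.

Lemma stage_upper_bound (HI : directed_cat I) n (x y : St (stage I n)) :
  exists b : Bnew (stage I n), bR b x /\ bR b y.
Proof.
  destruct (stage_legs_agree HI n x y) as (u & F & G & agree).
  exists (cone_above n x y u F G agree); apply cone_above_ge.
Qed.

Lemma AI_upper_bound (HI : directed_cat I) (a b : AI I) :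
  exists z, AIle I a z /\ AIle I b z /\ projT1 a < projT1 z.
Proof.
  destruct (AI_common_stage a b) as (n & x & y & <- & <-).
  destruct (stage_upper_bound HI n x y) as [bz [Hx Hy]].
  exists (AI_of (S n) (inr bz)); split; [|split].
  - apply (AIle_stage (S n) (inl x) (inr bz)); exact Hx.
  - apply (AIle_stage (S n) (inl y) (inr bz)); exact Hy.
  - pose proof (AI_of_level_lt n x); simpl; lia.
Qed.

Lemma AI_nonempty (HI : directed_cat I) : inhabited (AI I).
Proof.
  destruct HI as [[o] _]; constructor; exists 0.
  refine {| bR := fun _ => False; binf := o; bmor := fun c hc => False_rect _ hc |}.
  - exists nil; simpl; tauto.
  - intros c _ [].
  - intros c _ [].
Qed.

Lemma AI_poset : is_poset (AI I) (AIle I).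
Proof.
  split; [|split].
  - intros a; rewrite <- (AI_of_AIpt a); apply AIle_stage, stage_le_refl.
  - intros a b Hab Hba; destruct (AI_common_stage a b) as (n & x & y & <- & <-).
    rewrite AIle_stage in Hab, Hba; f_equal; apply stage_le_antisym; assumption.
  - intros a b c Hab Hbc; destruct (AI_common_stage a c) as (n & x & z & <- & <-).
    destruct (AI_of_surj n b) as [y <-].
    { apply AIle_level in Hbc; pose proof (AI_of_level_lt n z); lia. }
    rewrite AIle_stage in *; eapply stage_le_trans; eassumption.
Qed.

Lemma AI_cofinite : cofinite (AI I) (AIle I).
Proof.
  intros [k B]; destruct (stage_lower_finite (S k) (inr B)) as [l Hl].
  exists (map (AI_of (S k)) l); intros z Hz.
  destruct (AI_of_surj (S k) z) as [x Hx]; [apply AIle_level in Hz; simpl in Hz; lia|].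
  subst z.
  apply in_map, Hl, (AIle_stage (S k) x (inr B)); exact Hz.
Qed.

End Construction.

Theorem lemma3p9 (I : Cat) (HI : directed_cat I) :
  is_poset (AI I) (AIle I) /\ cofinite (AI I) (AIle I) /\
  directed_poset (AI I) (AIle I) /\ infinite_height (AI I) (AIle I).
Proof.
  split; [exact (AI_poset I)|split; [exact (AI_cofinite I)|split]].
  - split; [exact (AI_nonempty I HI)|].
    intros a b; destruct (AI_upper_bound I HI a b) as (z & Haz & Hbz & _); eauto.
  - intros a; destruct (AI_upper_bound I HI a a) as (z & Haz & _ & Hlt).
    exists z; split; [exact Haz|intros ->; lia].
Qed.
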